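(* Let $\theta\in\mathbb{R}$, let $G$ be a graph with maximum degree at most $D$, and let $u$ be a $\theta$-positive vertex of $G$. Then $\nu_{G,u}$ has no extended states at $\theta$, i.e. \[\lim_{\varepsilon\to0+}\frac{\nu_{G,u}([\theta-\varepsilon,\theta+\varepsilon])-\nu_{G,u}(\{\theta\})}{\varepsilon}=0.\]
   Context: Matching measure: for a (not necessarily connected) graph $G$ and vertex $u$, $\nu_{G,u}$ is the spectral measure at the one-vertex path $u$ of the adjacency operator of the path tree $T(G,u)$ (vertices: finite paths in $G$ starting at $u$; two paths adjacent iff one is obtained from the other by deleting its last vertex). $G-u$ denotes $G$ with $u$ deleted. A vertex $u$ is $\theta$-positive in $G$ if $\sum_{v\sim u}\nu_{G-u,v}(\{\theta\})>0$, the sum over neighbors $v$ of $u$. *)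

From HB Require Import structures.
From mathcomp Require Import all_boot all_order all_algebra.
From mathcomp Require Import all_classical all_reals all_analysis.
Set Implicit Arguments. Unset Strict Implicit. Unset Printing Implicit Defensive.
Import Order.TTheory GRing.Theory Num.Theory.
Local Open Scope classical_set_scope.
Local Open Scope ring_scope.

(* A locally finite (possibly infinite) simple graph on vertex type V is given
   by its neighbourhood lists N v. *)
Definition simple_graph (V : eqType) (N : V -> seq V) : Prop :=
  [/\ forall v, uniq (N v),
      forall v, v \notin N v &
      forall v w, w \in N v -> v \in N w].

(* G - u : delete vertex u (u becomes isolated, and is removed from all
   neighbourhoods; it is never reached from any other vertex). *)
Definition del_vertex (V : eqType) (N : V -> seq V) (u : V) : V -> seq V :=
  fun v => if v == u then [::] else [seq w <- N v | w != u].

(* Path tree T(G,u): vertices are (self-avoiding) paths in G starting at u,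
   stored REVERSED: the head of the list is the last vertex of the path. *)
Definition ptree_nbrs (V : eqType) (N : V -> seq V) (p : seq V) : seq (seq V) :=
  match p with
  | [::] => [::]
  | x :: q => [seq w :: p | w <- N x & w \notin p] ++
              (if q is _ :: _ then [:: q] else [::])
  end.

Fixpoint ptree_walks (V : eqType) (N : V -> seq V) (k : nat) (p r : seq V) : nat :=
  match k with
  | 0 => (p == r)
  | k'.+1 => \sum_(s <- ptree_nbrs N p) ptree_walks N k' s r
  end.

(* <A^k delta_root, delta_root> for the adjacency operator A of T(G,u):
   number of closed walks of length k at the root path [:: u]. *)
Definition ptree_moment (V : eqType) (N : V -> seq V) (u : V) (k : nat) : nat :=
  ptree_walks N k [:: u] [:: u].

(* nu is the matching measure nu_{G,u}: the spectral measure of the (bounded,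
   self-adjoint) adjacency operator of T(G,u) at the root, i.e. the Borel
   measure on R with int x^k dnu = <A^k delta_root, delta_root> for all k
   (unique, since A is bounded so the moment problem is determinate). *)
Definition is_matching_measure (R : realType) (V : eqType) (N : V -> seq V)
  (u : V) (nu : {measure set R -> \bar R}) : Prop :=
  forall k : nat,
    nu.-integrable setT (fun x : R => (x ^+ k)%:E) /\
    (\int[nu]_x (x ^+ k)%:E = ((ptree_moment N u k)%:R)%:E)%E.

From HB Require Import structures.
From mathcomp Require Import all_boot all_order all_algebra.
From mathcomp Require Import all_classical all_reals all_analysis.
From mathcomp Require Import zify ring lra.
Import Order.TTheory GRing.Theory Num.Theory.
Local Open Scope classical_set_scope.
Local Open Scope ring_scope.

(* Let m_k be the moments of nu_{G,u} and s_k those of sum_{v ~ u} nu_{G-u,v}.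
   Splitting the closed walks at the root of the path tree at their first
   return gives m_{k+1} = sum_{j<k} m_j s_{k-1-j}, and this recursion yields,
   for all polynomials p and q,
     int p q dnu_{G,u} = int p dnu_{G,u} * int q dnu_{G,u}
                         + sum_{v ~ u} int (A p) (A q) dnu_{G-u,v},
   where (A p)(y) = int (p(y) - p(x)) / (y - x) dnu_{G,u}(x). As
   (A ((X - theta) p))(theta) = int p dnu_{G,u}, keeping only the atoms at theta
   on the right gives c (int p dnu_{G,u})^2 <= int (X - theta)^2 p^2 dnu_{G,u}
   with c = sum_{v ~ u} nu_{G-u,v}({theta}) > 0. A suitable power p of
   1 - (X - theta)^2 / L^2 is >= 1/2 on [theta - eps, theta + eps] and satisfies
   (X - theta)^2 p^2 <= 3 eps^2 p on the support of nu_{G,u}, so that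
   nu_{G,u}([theta - eps, theta + eps]) <= 6 eps^2 / c. *)

Set Implicit Arguments. Unset Strict Implicit. Unset Printing Implicit Defensive.

Section PolyLinear.
Variables (R : nzRingType) (V : lmodType R).
Implicit Types (p : {poly R}) (F : nat -> V).

Definition polylin F p : V := \sum_(i < size p) p`_i *: F i.

Lemma polylin_wide F p n : (size p <= n)%N -> polylin F p = \sum_(i < n) p`_i *: F i.
Proof.
move=> le_pn; rewrite /polylin (big_ord_widen n (fun i => p`_i *: F i) le_pn).
rewrite big_mkcond; apply: eq_bigr => i _.
by case: ltnP => // /(nth_default 0) ->; rewrite scale0r.
Qed.

Lemma polylin_is_linear F : linear (polylin F).
Proof.
move=> a p q; set n := maxn (size (a *: p + q)) (maxn (size p) (size q)).
have [pn qn] : (size p <= n /\ size q <= n)%N by split; rewrite !leq_max leqnn ?orbT.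
rewrite !(@polylin_wide _ _ n) ?leq_maxl // scaler_sumr -big_split.
by apply: eq_bigr => i _; rewrite coefD coefZ scalerDl scalerA.
Qed.

HB.instance Definition _ F :=
  GRing.isLinear.Build R {poly R} V *:%R (polylin F) (polylin_is_linear F).

Lemma polylinXn F n : polylin F 'X^n = F n.
Proof.
rewrite (@polylin_wide _ _ n.+1) ?size_polyXn // big_ord_recr /= coefXn eqxx scale1r.
by rewrite big1 ?add0r // => i _; rewrite coefXn (ltn_eqF (ltn_ord i)) scale0r.
Qed.

Lemma polylinC F c : polylin F c%:P = c *: F 0%N.
Proof. by rewrite (@polylin_wide _ _ 1) ?size_polyC_leq1 // big_ord1 coefC. Qed.

Lemma polylin_mulX F p : polylin F (p * 'X) = polylin (F \o succn) p.
Proof.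
have le_pX : (size (p * 'X)%R <= (size p).+1)%N.
  by have [->|/size_mulX ->//] := eqVneq p 0; rewrite mul0r size_poly0.
rewrite (polylin_wide _ le_pX) big_ord_recl coefMX /= scale0r add0r.
by apply: eq_bigr => i _; rewrite coefMX.
Qed.

End PolyLinear.

Lemma linear_polylin (R : nzRingType) (V W : lmodType R) (f : {linear V -> W})
    (F : nat -> V) (p : {poly R}) :
  f (polylin F p) = polylin (f \o F) p.
Proof. by rewrite linear_sum; apply: eq_bigr => i _; rewrite linearZ. Qed.

Section Moment.
Variable R : nzRingType.
Implicit Types (p : {poly R}) (w : nat -> R).

Definition moment w p : R := @polylin R R^o w p.

HB.instance Definition _ w :=
  GRing.isLinear.Build R {poly R} R *%R (moment w) (@polylin_is_linear R R^o w).

Lemma momentXn w n : moment w 'X^n = w n.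
Proof. exact: (@polylinXn R R^o). Qed.

Lemma momentC w c : moment w c%:P = c * w 0%N.
Proof. exact: (@polylinC R R^o). Qed.

Lemma moment_mulX w p : moment w (p * 'X) = moment (w \o succn) p.
Proof. exact: (@polylin_mulX R R^o). Qed.

Lemma moment_polylin F w p : moment w (polylin F p) = moment (moment w \o F) p.
Proof. exact: (@linear_polylin R _ R^o (moment w)). Qed.

Lemma moment_sumw (I : Type) (r : seq I) (W : I -> nat -> R) p :
  moment (fun k => \sum_(i <- r) W i k) p = \sum_(i <- r) moment (W i) p.
Proof.
by rewrite /moment /polylin exchange_big; apply: eq_bigr => k _; rewrite scaler_sumr.
Qed.

End Moment.

Section AssociatedPolynomial.
Variables (R : comNzRingType) (m s : nat -> R).
Hypothesis m0 : m 0%N = 1.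
Hypothesis mS : forall k, m k.+1 = \sum_(j < k) m j * s (k.-1 - j)%N.
Implicit Types p q : {poly R}.

Definition assoc_basis i : {poly R} := \sum_(j < i) m j *: 'X^(i.-1 - j).
(* When m are the moments of a measure nu,
   (assoc p).[y] = int (p(y) - p(x)) / (y - x) dnu(x). *)
Definition assoc p : {poly R} := polylin assoc_basis p.
HB.instance Definition _ := GRing.Linear.copy assoc (polylin assoc_basis).

Lemma assoc_basisS i : assoc_basis i.+1 = 'X * assoc_basis i + (m i)%:P.
Proof.
rewrite /assoc_basis big_ord_recr /= subnn expr0 alg_polyC mulr_sumr; congr (_ + _).
apply: eq_bigr => j _; rewrite -scalerAr -exprS; congr (_ *: 'X^_).
by case: i j => [[]//|i] j; rewrite /= subSn // -ltnS.
Qed.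

Lemma moment_assoc_basis i : moment s (assoc_basis i) = m i.+1.
Proof. by rewrite mS linear_sum; apply: eq_bigr => j _; rewrite linearZ /= momentXn. Qed.

Lemma assocC c : assoc c%:P = 0.
Proof. by rewrite /assoc polylinC /assoc_basis big_ord0 scaler0. Qed.

Lemma assoc_mulX p : assoc (p * 'X) = 'X * assoc p + (moment m p)%:P.
Proof.
rewrite /assoc polylin_mulX /polylin mulr_sumr rmorph_sum -big_split /=.
by apply: eq_bigr => i _; rewrite assoc_basisS scalerDr scalerAr polyCM mul_polyC.
Qed.

Lemma moment_assoc p : moment s (assoc p) = moment m (p * 'X).
Proof.
rewrite moment_polylin moment_mulX.
by apply: eq_bigr => i _; rewrite /= moment_assoc_basis.
Qed.

Lemma moment_mul_assoc p q :
  moment m (p * q) = moment m p * moment m q + moment s (assoc p * assoc q).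
Proof.
elim/poly_ind: p q => [|p c IHp] q.
  by rewrite mul0r !linear0 !mul0r linear0 addr0.
have lhsE : moment m ((p * 'X + c%:P) * q) = moment m (p * (q * 'X)) + c * moment m q.
  by rewrite mulrDl linearD mul_polyC linearZ -mulrA (mulrC 'X).
have assoc_qX : moment s (assoc p * assoc (q * 'X)) =
    moment s ('X * (assoc p * assoc q)) + moment m q * moment m (p * 'X).
  by rewrite assoc_mulX mulrDr linearD mulrCA (mulrC _ _%:P) mul_polyC linearZ /= moment_assoc.
have assoc_pX : assoc (p * 'X + c%:P) = 'X * assoc p + (moment m p)%:P.
  by rewrite linearD /= assoc_mulX assocC addr0.
rewrite lhsE IHp assoc_qX assoc_pX [moment m (_ + _)]linearD /= momentC m0 mulr1.
rewrite (mulrDl ('X * assoc p)) linearD mul_polyC linearZ /= moment_assoc -mulrA.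
ring.
Qed.

Lemma horner_assoc_XsubC_mul t p : (assoc (('X - t%:P) * p)).[t] = moment m p.
Proof.
rewrite mulrBl mul_polyC mulrC linearB linearZ /= assoc_mulX.
by rewrite hornerD hornerN hornerD hornerZ hornerC hornerM hornerX; ring.
Qed.

End AssociatedPolynomial.

Section Bernoulli.
Variable R : realFieldType.

Lemma bernoulli_ineq (x : R) n : -1 <= x -> 1 + n%:R * x <= (1 + x) ^+ n.
Proof.
move=> x_ge; elim: n => [|n IHn]; first by rewrite mul0r addr0 expr0.
have x1_ge0 : 0 <= 1 + x by lra.
have := ler_wpM2l x1_ge0 IHn.
have : 0 <= n%:R * x * x by rewrite -mulrA mulr_ge0 // -expr2 sqr_ge0.
by rewrite exprS -natr1; nra.
Qed.

Lemma natr_mul_expr_onem_le1 (y : R) n : 0 <= y <= 1 -> n%:R * y * (1 - y) ^+ n <= 1.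
Proof.
case/andP=> y_ge0 y_le1; have onem_ge0 : 0 <= (1 - y) ^+ n by rewrite exprn_ge0 ?subr_ge0.
apply: (@le_trans _ _ ((1 + y) ^+ n * (1 - y) ^+ n)).
  apply: ler_wpM2r => //; apply: le_trans (bernoulli_ineq n _); lra.
by rewrite -exprMn exprn_ile1 //; nra.
Qed.

End Bernoulli.

Lemma natr_mul_le1_le0 (R : archiRealFieldType) (a : R) :
  (forall k, a * k.+1%:R <= 1) -> a <= 0.
Proof.
move=> a_le; rewrite leNgt; apply/negP => a_gt0.
have /archi_boundP : 0 <= a^-1 by rewrite invr_ge0 ltW.
set k := Num.bound _ => inv_lt_k.
have := a_le k; apply/negP; rewrite -ltNge -[X in X < _](mulfV (lt0r_neq0 a_gt0)) ltr_pM2l //.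
by apply: lt_le_trans inv_lt_k _; rewrite ler_nat.
Qed.

Section BumpPolynomial.
Variables (R : realFieldType) (theta L : R).
Hypothesis L_gt0 : 0 < L.

Definition bump_poly n : {poly R} := (1 - ('X - theta%:P) ^+ 2 * (L ^+ 2)^-1%:P) ^+ n.

Lemma horner_bump_poly n x : (bump_poly n).[x] = (1 - (x - theta) ^+ 2 / L ^+ 2) ^+ n.
Proof. by rewrite horner_exp !hornerE. Qed.

Lemma bump_poly_ge0 M x : 0 <= (bump_poly (2 * M)).[x].
Proof. by rewrite horner_bump_poly exprM exprn_ge0 ?sqr_ge0. Qed.

Lemma bump_poly_sqr_le n x : (0 < n)%N -> `|x - theta| <= L ->
  ((('X - theta%:P) * bump_poly n) ^+ 2).[x] <= L ^+ 2 / n%:R * (bump_poly n).[x].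
Proof.
move=> n_gt0; rewrite ler_norml => /andP[x_ge x_le].
rewrite horner_exp hornerM hornerXsubC horner_bump_poly.
set y := (x - theta) ^+ 2 / L ^+ 2.
have L2_gt0 : 0 < L ^+ 2 by rewrite exprn_gt0.
have y_ge0 : 0 <= y by rewrite divr_ge0 ?sqr_ge0 ?ltW.
have y_le1 : y <= 1 by rewrite ler_pdivrMr // mul1r; nra.
have onem_ge0 : 0 <= (1 - y) ^+ n by rewrite exprn_ge0 // subr_ge0.
have -> : ((x - theta) * (1 - y) ^+ n) ^+ 2 =
    L ^+ 2 / n%:R * (1 - y) ^+ n * (n%:R * y * (1 - y) ^+ n).
  by rewrite /y; field; rewrite pnatr_eq0 -lt0n n_gt0 lt0r_neq0.
rewrite -[leRHS]mulr1 ler_wpM2l ?natr_mul_expr_onem_le1 ?y_ge0 //.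
by rewrite mulr_ge0 // divr_ge0 ?ltW ?ltr0n.
Qed.

Lemma bump_poly_ge_half n x : (0 < n)%N -> 2 * n%:R * (x - theta) ^+ 2 <= L ^+ 2 ->
  2^-1 <= (bump_poly n).[x].
Proof.
move=> n_gt0 x_near; rewrite horner_bump_poly; set y := (x - theta) ^+ 2 / L ^+ 2.
have L2_gt0 : 0 < L ^+ 2 by rewrite exprn_gt0.
have y_ge0 : 0 <= y by rewrite divr_ge0 ?sqr_ge0 ?ltW.
have ny_le : n%:R * y <= 2^-1 by rewrite /y mulrA ler_pdivrMr //; lra.
have n_ge1 : 1 <= n%:R :> R by rewrite ler1n.
have y_le1 : y <= 1 by nra.
by apply: le_trans (bernoulli_ineq n _); lra.
Qed.

End BumpPolynomial.

Section PathTree.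
Variables (V : eqType) (N : V -> seq V).
Local Open Scope nat_scope.

Lemma size_ptree_nbrs D p : (forall x, size (N x) <= D) -> size (ptree_nbrs N p) <= D.+1.
Proof.
move=> N_le; case: p => [|x q] //=; rewrite size_cat size_map -addn1.
by apply: leq_add; [rewrite size_filter (leq_trans (count_size _ _)) | case: q].
Qed.

Lemma ptree_walks_le D k p r :
  (forall x, size (N x) <= D) -> ptree_walks N k p r <= D.+1 ^ k.
Proof.
move=> N_le; elim: k p => [|k IHk] p /=; first by case: (p == r).
apply: (@leq_trans (\sum_(s <- ptree_nbrs N p) D.+1 ^ k)); first exact: leq_sum.
by rewrite big_const_seq iter_addn_0 expnS mulnC leq_mul2r count_predT size_ptree_nbrs ?orbT.
Qed.

Variable u : V.
Local Notation N' := (del_vertex N u).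

Lemma del_vertexE x : x != u -> N' x = [seq w <- N x | w != u].
Proof. by rewrite /del_vertex => /negbTE ->. Qed.

(* p ++ [:: u] is the copy in T(G, u) of the vertex p of T(G - u, v); the walks
   from it to the root are split at their first visit to the root. *)
Lemma ptree_walks_to_root v k p : v \in N u -> p != [::] -> u \notin p -> last u p = v ->
  ptree_walks N k (p ++ [:: u]) [:: u] =
  \sum_(j < k) ptree_moment N u j * ptree_walks N' (k.-1 - j) p [:: v].
Proof.
move=> vNu; elim: k p => [|k IHk] [|x q] // _.
  by rewrite big_ord0 /= eqseq_cons => _ _; case: q => [|y q]; rewrite /= ?andbF.
rewrite inE negb_or => /andP[ux uq] last_v.
have walks'S j : (j < k)%N -> ptree_walks N' (k - j) (x :: q) [:: v] =
    \sum_(w <- [seq w <- N' x | w \notin x :: q])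
      ptree_walks N' (k.-1 - j) (w :: x :: q) [:: v] +
    (if q is _ :: _ then ptree_walks N' (k.-1 - j) q [:: v] else 0).
  move=> ltjk; have -> : k - j = (k.-1 - j).+1 by lia.
  rewrite /= big_cat big_map; case: q {last_v uq} => [|y r].
    by rewrite big_nil.
  by rewrite big_seq1.
set C := [seq w <- N' x | w \notin x :: q] in walks'S *.
have childrenE : [seq w <- N x | w \notin (x :: q) ++ [:: u]] = C.
  rewrite /C del_vertexE 1?eq_sym // -filter_predI; apply: eq_filter => w /=.
  by rewrite !inE mem_cat inE !negb_or andbA.
have child_walks w : w \in C -> ptree_walks N k ((w :: x :: q) ++ [:: u]) [:: u] =
    \sum_(j < k) ptree_moment N u j * ptree_walks N' (k.-1 - j) (w :: x :: q) [:: v].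
  rewrite mem_filter => /andP[wxq]; rewrite del_vertexE 1?eq_sym // mem_filter.
  case/andP=> wu _; apply: IHk => //; rewrite inE negb_or eq_sym wu.
  by rewrite inE negb_or ux.
have parentE : (if q ++ [:: u] is _ :: _ then [:: q ++ [:: u]] else [::]) = [:: q ++ [:: u]].
  by case: (q).
rewrite [LHS]/= parentE big_cat big_map big_seq1 childrenE big_ord_recr /= subnn.
rewrite (eq_bigr (fun j : 'I_k =>
    \sum_(w <- C) ptree_moment N u j * ptree_walks N' (k.-1 - j) (w :: x :: q) [:: v] +
    ptree_moment N u j * (if q is _ :: _ then ptree_walks N' (k.-1 - j) q [:: v] else 0)));
  last by move=> j _; rewrite walks'S // mulnDr big_distrr.
rewrite big_split exchange_big /= -addnA; congr (_ + _).
  by rewrite !big_seq; apply: eq_bigr => w wC; rewrite child_walks.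
move: last_v uq; case: (q) => [|y r] /= last_v uq.
  by rewrite last_v eqxx big1 ?muln1 // => i _; rewrite muln0.
by rewrite (IHk (y :: r)) // eqseq_cons andbC muln0 addn0.
Qed.

Lemma ptree_moment_rec k : u \notin N u ->
  ptree_moment N u k.+1 =
  \sum_(j < k) ptree_moment N u j * \sum_(v <- N u) ptree_moment N' v (k.-1 - j).
Proof.
move=> uNu; rewrite /ptree_moment [LHS]/= cats0 big_map.
have -> : [seq w <- N u | w \notin [:: u]] = N u.
  by apply/all_filterP/allP => w wNu; rewrite inE; apply: contraNneq uNu => wu; rewrite -{1}wu.
rewrite big_seq (eq_bigr (fun v =>
    \sum_(j < k) ptree_moment N u j * ptree_moment N' v (k.-1 - j))).
  by rewrite -big_seq exchange_big; apply: eq_bigr => j _; rewrite big_distrr.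
move=> v vNu; apply: (@ptree_walks_to_root v k [:: v]) => //.
by rewrite inE; apply: contraNneq uNu => uv; rewrite {1}uv.
Qed.

End PathTree.

Definition has_moments (R : realType) (nu : {measure set R -> \bar R}) (w : nat -> R) :=
  forall k : nat, nu.-integrable setT (fun x => (x ^+ k)%:E) /\
    (\int[nu]_x (x ^+ k)%:E = (w k)%:E)%E.

Section Moments.
Variables (R : realType) (nu : {measure set R -> \bar R}) (w : nat -> R).
Hypothesis nu_w : has_moments nu w.
Implicit Types p q : {poly R}.

Let hornerE p : (fun x => (p.[x])%:E) = (fun x => \sum_(i < size p) (p`_i)%:E * (x ^+ i)%:E)%E.
Proof. by apply: funext => x; rewrite horner_coef sumEFin. Qed.

Lemma integrable_horner p : nu.-integrable setT (fun x => (p.[x])%:E).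
Proof.
by rewrite hornerE; apply: integrable_sum => // i _; apply: integrableZl; case: (nu_w i).
Qed.

Lemma integral_horner p : (\int[nu]_x (p.[x])%:E = (moment w p)%:E)%E.
Proof.
rewrite hornerE integral_sum //; last by move=> i; apply: integrableZl; case: (nu_w i).
rewrite -sumEFin; apply: eq_bigr => i _; case: (nu_w i) => int_i int_iE.
by rewrite integralZl // int_iE EFinM.
Qed.

Lemma Rintegral_horner p : Rintegral nu setT (fun x => p.[x]) = moment w p.
Proof. by rewrite /Rintegral integral_horner. Qed.

Lemma has_moments_fin_num A : measurable A -> nu A \is a fin_num.
Proof.
move=> mA; rewrite ge0_fin_numE //; apply: (le_lt_trans (le_measure _ _ _ (subsetT A))).
- by rewrite inE.
- by rewrite inE.
have [_] := nu_w 0; under eq_integral do rewrite expr0.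
by rewrite integral_cst // mul1e -[X in (X < _)%E]/(nu setT) => ->; rewrite ltry.
Qed.

Lemma moment_le_on S p q : measurable S -> nu (~` S) = 0%E ->
  (forall x, S x -> p.[x] <= q.[x]) -> moment w p <= moment w q.
Proof.
move=> mS nuSC0 le_pq.
have RintegralS r : Rintegral nu setT (fun x => r.[x]) = Rintegral nu S (fun x => r.[x]).
  have mSC := measurableC mS; have /integrableP[mr _] := integrable_horner r.
  have intr : nu.-integrable (S `|` ~` S) (EFin \o horner r).
    by rewrite setUCr; exact: integrable_horner.
  rewrite -(setUCr S) (Rintegral_setU mS mSC intr) ?disj_set2E ?setICr //.
  by rewrite [X in _ + X]/Rintegral null_set_integral ?addr0 //; exact: measurable_funS mr.
rewrite -!Rintegral_horner !RintegralS; apply: le_Rintegral => //;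
  exact: integrableS (integrable_horner _).
Qed.

Lemma moment_ge0 p : (forall x, 0 <= p.[x]) -> 0 <= moment w p.
Proof. by move=> p_ge0; rewrite -Rintegral_horner; apply: Rintegral_ge0. Qed.

Lemma measure_le_moment A c p : measurable A -> 0 <= c ->
  (forall x, 0 <= p.[x]) -> (forall x, A x -> c <= p.[x]) -> c * fine (nu A) <= moment w p.
Proof.
move=> mA c_ge0 p_ge0 c_le_p; have /integrableP[mp _] := integrable_horner p.
rewrite -lee_fin EFinM fineK ?has_moments_fin_num // -integral_horner -integral_cst //.
apply: (@le_trans _ _ (\int[nu]_(x in A) (p.[x])%:E)%E).
  apply: ge0_le_integral => //; exact: measurable_funS mp.
by apply: ge0_subset_integral => // x _; rewrite lee_fin.
Qed.

Lemma atom_le_moment t p : p.[t] ^+ 2 * fine (nu [set t]) <= moment w (p ^+ 2).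
Proof.
apply: measure_le_moment => //.
- exact: sqr_ge0.
- by move=> x; rewrite horner_exp sqr_ge0.
- by move=> x ->; rewrite horner_exp.
Qed.

Lemma measure_compl_itv_eq0 b : 0 < b -> (forall k, w (2 * k)%N <= b ^+ (2 * k)) ->
  nu (~` `]- (2 * b), 2 * b[) = 0%E.
Proof.
move=> b_gt0 w_le; set C := ~` _.
have mC : measurable C by apply: measurableC; exact: measurable_itv.
have a_ge0 : 0 <= fine (nu C) by apply: fine_ge0.
have markov k : (2 * b) ^+ (2 * k) * fine (nu C) <= b ^+ (2 * k).
  apply: le_trans (w_le k); rewrite -momentXn; apply: measure_le_moment => //.
  - by rewrite exprn_ge0 ?mulr_ge0 ?ltW.
  - by move=> x; rewrite hornerXn exprM exprn_ge0 ?sqr_ge0.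
  move=> x; rewrite /C /= in_itv /= => /negP; rewrite negb_and -!leNgt hornerXn !exprM => x_out.
  rewrite lerXn2r ?nnegrE ?sqr_ge0 //; case/orP: x_out; nra.
have a_le k : fine (nu C) * k.+1%:R <= 1.
  have b_pos : 0 < b ^+ (2 * k) by rewrite exprn_gt0.
  have k_le : k.+1%:R <= 2 ^+ (2 * k) :> R.
    by rewrite -natrX ler_nat (leq_ltn_trans (leq_pmull k _) (ltn_expl _ _)).
  apply: le_trans (ler_wpM2l a_ge0 k_le) _; rewrite -(ler_pM2r b_pos) mul1r.
  by apply: le_trans (markov k); rewrite exprMn [leRHS]mulrC mulrA.
apply/eqP; rewrite -[nu C]fineK ?has_moments_fin_num // eqe; apply/eqP.
by apply/le_anti; rewrite a_ge0 natr_mul_le1_le0.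
Qed.
End Moments.

Lemma matching_measure_compl_itv_eq0 (R : realType) (V : eqType) (N : V -> seq V) (u : V)
    (D : nat) (nu : {measure set R -> \bar R}) :
  (forall v, size (N v) <= D)%N -> is_matching_measure N u nu ->
  nu (~` `]- (2 * D.+1%:R), 2 * D.+1%:R[) = 0%E.
Proof.
move=> N_le nu_mom; apply: (measure_compl_itv_eq0 nu_mom) => // k.
by rewrite -natrX ler_nat ptree_walks_le.
Qed.

Section PositiveVertex.
Variables (R : realType) (V : eqType) (N : V -> seq V) (u : V) (theta : R).
Variable nuGu : V -> {measure set R -> \bar R}.
Hypothesis uNu : u \notin N u.
Hypothesis nuGu_moments :
  forall v, v \in N u -> is_matching_measure (del_vertex N u) v (nuGu v).

Local Notation mG := (fun k => (ptree_moment N u k)%:R : R).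

Definition theta_mass : R := \sum_(v <- N u) fine (nuGu v [set theta]).

Lemma theta_mass_ge0 : 0 <= theta_mass.
Proof. by apply: sumr_ge0 => v _; apply: fine_ge0. Qed.

Lemma theta_mass_moment_le p :
  theta_mass * moment mG p ^+ 2 <= moment mG ((('X - theta%:P) * p) ^+ 2).
Proof.
set q := ('X - theta%:P) * p.
set mGu := fun v k => (ptree_moment (del_vertex N u) v k)%:R : R.
have mG0 : mG 0%N = 1 by rewrite /ptree_moment /= eqxx.
set sG := fun k => \sum_(v <- N u) mGu v k.
have mGS k : mG k.+1 = \sum_(j < k) mG j * sG (k.-1 - j)%N.
  by rewrite /= ptree_moment_rec // natr_sum; apply: eq_bigr => j _; rewrite natrM natr_sum.
rewrite expr2 (@moment_mul_assoc _ mG sG mG0 mGS) moment_sumw -expr2.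
rewrite -[leLHS]add0r; apply: lerD; first exact: sqr_ge0.
rewrite /theta_mass mulr_suml big_seq [leRHS]big_seq; apply: ler_sum => v vNu.
rewrite mulrC -(horner_assoc_XsubC_mul mG theta p) -expr2.
exact: atom_le_moment (nuGu_moments vNu) _ _.
Qed.

End PositiveVertex.

Section Window.
Variables (R : realType) (V : eqType) (N : V -> seq V) (u : V) (D : nat) (theta : R).
Variables (nuG : {measure set R -> \bar R}) (nuGu : V -> {measure set R -> \bar R}).
Hypothesis uNu : u \notin N u.
Hypothesis N_le : forall v, (size (N v) <= D)%N.
Hypothesis nuG_moments : is_matching_measure N u nuG.
Hypothesis nuGu_moments :
  forall v, v \in N u -> is_matching_measure (del_vertex N u) v (nuGu v).

Local Notation mG := (fun k => (ptree_moment N u k)%:R : R).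
Local Notation tmass := (theta_mass N u theta nuGu).
(* nuG lives on ]-2(D+1), 2(D+1)[, where |x - theta| < L. *)
Let L := 2 * D.+1%:R + `|theta|.

Lemma window_measure_le M eps : (0 < M)%N -> 4 * M%:R * eps ^+ 2 <= L ^+ 2 ->
  tmass * fine (nuG `[theta - eps, theta + eps]%classic) <= L ^+ 2 / M%:R.
Proof.
move=> M_gt0 eps_small; set I := `[_, _]%classic.
have L_gt0 : 0 < L by rewrite /L ltr_pwDl ?mulr_gt0.
have twoM_gt0 : (0 < 2 * M)%N by rewrite muln_gt0.
set p := bump_poly theta L (2 * M); set c := L ^+ 2 / (2 * M)%:R.
have p_ge0 x : 0 <= p.[x] := bump_poly_ge0 theta L M x.
have Mp_ge0 : 0 <= moment mG p := moment_ge0 nuG_moments p_ge0.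
have nuI_le : 2^-1 * fine (nuG I) <= moment mG p.
  apply: (measure_le_moment nuG_moments) => //; first exact: measurable_itv.
  move=> x; rewrite /I /= in_itv /= => /andP[x_ge x_le].
  have x_eps : (x - theta) ^+ 2 <= eps ^+ 2 by nra.
  have M_ge0 : 0 <= M%:R :> R by [].
  by apply: bump_poly_ge_half => //; rewrite natrM; nra.
have sqr_le : moment mG ((('X - theta%:P) * p) ^+ 2) <= c * moment mG p.
  rewrite -[c * _]linearZ /=; apply: (moment_le_on nuG_moments (measurable_itv _)).
    exact: matching_measure_compl_itv_eq0 N_le nuG_moments.
  move=> x; rewrite /= in_itv /= hornerZ => /andP[x_gt x_lt].
  apply: bump_poly_sqr_le => //; apply: le_trans (ler_normB _ _) _.
  by rewrite lerD2r ler_norml !ltW.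
have key := theta_mass_moment_le theta uNu nuGu_moments p.
have tm_ge0 := theta_mass_ge0 N u theta nuGu.
have c_ge0 : 0 <= c by rewrite divr_ge0 // exprn_ge0 // ltW.
have nuI_ge0 : 0 <= fine (nuG I) by apply: fine_ge0.
have -> : L ^+ 2 / M%:R = 2 * c by rewrite /c natrM; field; rewrite pnatr_eq0 -lt0n.
have [Mp0|Mp_neq0] := eqVneq (moment mG p) 0.
  by rewrite Mp0 in nuI_le; nra.
have Mp_gt0 : 0 < moment mG p by rewrite lt_neqAle eq_sym Mp_neq0.
have : tmass * moment mG p <= c.
  by rewrite -(ler_pM2r Mp_gt0) -mulrA -expr2 (le_trans key).
nra.
Qed.

Lemma window_measure_le_sqr eps : 0 < eps -> 4 * eps <= L ->
  tmass * fine (nuG `[theta - eps, theta + eps]%classic) <= 6 * eps ^+ 2.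
Proof.
move=> eps_gt0 eps_le; set X := L ^+ 2 / (4 * eps ^+ 2).
have eps2_gt0 : 0 < 4 * eps ^+ 2 by rewrite mulr_gt0 ?exprn_gt0.
have XE : L ^+ 2 = 4 * eps ^+ 2 * X by rewrite /X mulrC divfK ?lt0r_neq0.
have X_ge4 : 4 <= X.
  have : 16 * eps ^+ 2 <= L ^+ 2 by rewrite !expr2; nra.
  by rewrite XE; nra.
have /andP[M_le M_gt] := truncn_itv (le_trans (ler0n _ 4) X_ge4).
set M := Num.truncn X in M_le M_gt.
have M_gt0 : (0 < M)%N by rewrite -(ltr0n R); rewrite -natr1 in M_gt; lra.
apply: le_trans (window_measure_le M_gt0 _) _; first by rewrite XE; nra.
rewrite ler_pdivrMr ?ltr0n // XE; rewrite -natr1 in M_gt; nra.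
Qed.

Lemma difference_quotient_bounds eps : 0 < tmass -> 0 < eps -> 4 * eps <= L ->
  0 <= (fine (nuG `[theta - eps, theta + eps]%classic) - fine (nuG [set theta])) / eps
    <= 6 * eps / tmass.
Proof.
move=> tm_gt0 eps_gt0 eps_le; set A := fine _; set a := fine _.
have a_le_A : a <= A.
  apply: fine_le; try by apply: (has_moments_fin_num nuG_moments).
  apply: le_measure; rewrite ?inE //.
  by move=> x /= ->; rewrite /= in_itv /=; apply/andP; split; lra.
have a_ge0 : 0 <= a by apply: fine_ge0.
have := window_measure_le_sqr eps_gt0 eps_le; rewrite -/A => tmA_le.
rewrite divr_ge0 ?subr_ge0 ?(ltW eps_gt0) //= ler_pdivrMr // mulrAC ler_pdivlMr //.
nra.
Qed.

End Window.

Unset Implicit Arguments. Set Strict Implicit. Set Printing Implicit Defensive.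

Theorem proposition7p6 (R : realType) (V : eqType) (N : V -> seq V) (D : nat)
  (theta : R) (u : V)
  (nuG : {measure set R -> \bar R})
  (nuGu : V -> {measure set R -> \bar R}) :
  simple_graph N ->
  (forall v, size (N v) <= D)%N ->
  is_matching_measure N u nuG ->
  (forall v, v \in N u -> is_matching_measure (del_vertex N u) v (nuGu v)) ->
  (0 < \sum_(v <- N u) nuGu v [set theta])%E ->
  (fun eps : R =>
     (fine (nuG `[theta - eps, theta + eps]%classic) - fine (nuG [set theta])) / eps)
    @ 0^'+ --> 0.
Proof.
move=> [_ N_irr _] N_le nuG_moments nuGu_moments mass_gt0.
have tm_gt0 : 0 < theta_mass N u theta nuGu.
  rewrite -lte_fin; apply: lt_le_trans mass_gt0 _; rewrite /theta_mass -sumEFin.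
  rewrite big_seq [leRHS]big_seq le_eqVlt; apply/orP; left; apply/eqP.
  by apply: eq_bigr => v vNu; rewrite fineK // (has_moments_fin_num (nuGu_moments v vNu)).
set L := 2 * D.+1%:R + `|theta|.
have L4_gt0 : 0 < L / 4 by rewrite divr_gt0 // ltr_pwDl ?mulr_gt0.
apply/cvgrPdist_le => e e_gt0; near=> eps.
have eps_gt0 : 0 < eps by near: eps; exact: nbhs_right_gt.
have eps_le : eps <= L / 4 by near: eps; exact: nbhs_right_le.
have eps_e : eps <= e * theta_mass N u theta nuGu / 6.
  by near: eps; apply: nbhs_right_le; rewrite divr_gt0 ?mulr_gt0.
have eps4_le : 4 * eps <= L by lra.
have /andP[q_ge0 q_le] := difference_quotient_bounds (N_irr u) N_le nuG_moments nuGu_moments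
  tm_gt0 eps_gt0 eps4_le.
rewrite sub0r normrN ger0_norm //; apply: le_trans q_le _.
by rewrite ler_pdivrMr //; lra.
Unshelve. all: end_near.
Qed.
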